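(* For every twin-free bipartite graph $G$ of order $n$, we have $i_{\max}(G) \ge \lfloor n/2\rfloor+1$, and this inequality is sharp.
   Context: $i_{\max}(G)$ denotes the number of maximal independent sets of $G$. A graph is twin-free if no two vertices have the same open neighbourhood. *)

From mathcomp Require Import all_boot.
Set Implicit Arguments. Unset Strict Implicit. Unset Printing Implicit Defensive.

Definition simple_graph (T : finType) (e : rel T) : Prop :=
  symmetric e /\ irreflexive e.

Definition bipartite (T : finType) (e : rel T) : Prop :=
  exists A : {set T}, forall x y, e x y -> (x \in A) != (y \in A).

Definition nbhd (T : finType) (e : rel T) (x : T) : {set T} := [set y | e x y].

Definition twin_free (T : finType) (e : rel T) : Prop :=
  forall x y, nbhd e x = nbhd e y -> x = y.

Definition independent (T : finType) (e : rel T) (S : {set T}) : bool :=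
  [forall x in S, forall y in S, ~~ e x y].

Definition maximal_independent (T : finType) (e : rel T) (S : {set T}) : bool :=
  independent e S && [forall S' : {set T}, (S \proper S') ==> ~~ independent e S'].

Definition imax (T : finType) (e : rel T) : nat :=
  #|[set S : {set T} | maximal_independent e S]|.

From mathcomp Require Import all_boot.
From mathcomp Require Import zify.

Set Implicit Arguments. Unset Strict Implicit. Unset Printing Implicit Defensive.

(* Fix a side P of the bipartition. Every K \subset P extends to the independent
   set K together with all vertices outside P having no neighbour in K; it meets
   P exactly in K, and it is maximal for K = P and for K = P minus N(v), v not in
   P. Since N(v) \subset P is recovered from the latter, twin-freeness makes these
   #|~: P| maximal independent sets pairwise distinct, and distinct from the
   extension of P unless v is isolated. At most one vertex is isolated, so one
   side gives #|~: P| + 1 sets and the other at least #|P|: 2 i_max >= n + 1.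
   Equality holds for the half graph (even x ~ odd y iff x < y) on n vertices,
   whose maximal independent sets are the n/2 + 1 staircases. *)

Section Independence.
Variables (T : finType) (e : rel T).

Lemma independentP (S : {set T}) :
  reflect {in S &, forall x y, ~~ e x y} (independent e S).
Proof.
apply: (iffP forallP) => [h x y xS yS | h x].
  by move/implyP: (h x) => /(_ xS) /forallP /(_ y) /implyP /(_ yS).
by apply/implyP => xS; apply/forallP => y; apply/implyP; exact: h.
Qed.

Lemma dominating_maximal_independent (S : {set T}) :
  independent e S -> (forall z, z \notin S -> exists2 w, w \in S & e z w) ->
  maximal_independent e S.
Proof.
move=> indS domS; rewrite /maximal_independent indS /=.
apply/forallP => S'; apply/implyP => /properP [subSS' [z zS' zNS]].
have [w wS ezw] := domS z zNS.
by apply/independentP => /(_ z w zS' (subsetP subSS' w wS)); rewrite ezw.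
Qed.

Lemma maximal_independent_eq (S S' : {set T}) :
  maximal_independent e S -> S \subset S' -> independent e S' -> S = S'.
Proof.
move=> /andP [_ /forallP /(_ S') maxS] subSS' indS'; apply/eqP.
apply: (contraTT _ indS') => neqSS'.
by apply: (implyP maxS); rewrite properEneq neqSS' subSS'.
Qed.

End Independence.

Section Extension.
Variables (T : finType) (e : rel T) (P : {set T}).
Hypothesis e_sym : symmetric e.
Hypothesis e_cross : forall x y, e x y -> (x \in P) != (y \in P).

Definition extend (K : {set T}) : {set T} :=
  K :|: [set w | (w \notin P) && [forall u in K, ~~ e w u]].

Lemma extend_meet (K : {set T}) : K \subset P -> extend K :&: P = K.
Proof.
move=> subKP; apply/setP => x; rewrite !inE.
case: (boolP (x \in K)) => [xK|_] /=; first by rewrite (subsetP subKP).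
by case: (x \in P); rewrite ?andbF.
Qed.

Lemma maximal_independent_extend (K : {set T}) : K \subset P ->
  {in P :\: K, forall u, exists2 w, w \in extend K & e u w} ->
  maximal_independent e (extend K).
Proof.
move=> subKP domPK; apply: dominating_maximal_independent.
  apply/independentP => x y; rewrite !inE.
  move=> /orP [xK|/andP [xNP /forall_inP xK]] /orP [yK|/andP [yNP /forall_inP yK]].
  - by apply/negP => /e_cross; rewrite !(subsetP subKP).
  - by rewrite e_sym; exact: yK.
  - exact: xK.
  - by apply/negP => /e_cross; rewrite (negbTE xNP) (negbTE yNP).
move=> z; case: (boolP (z \in P)) => zP zNext.
  by apply: domPK; rewrite inE zP andbT; apply: contra zNext => zK; rewrite inE zK.
move: zNext; rewrite !inE zP negb_or => /andP [_ /forall_inPn [u uK ezu]].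
by exists u; rewrite ?inE ?uK // -(negbK (e z u)).
Qed.

Lemma maximal_independent_extend_part : maximal_independent e (extend P).
Proof. by apply: maximal_independent_extend => // u; rewrite setDv inE. Qed.

Lemma nbhd_subset (v : T) : v \notin P -> nbhd e v \subset P.
Proof.
move=> vNP; apply/subsetP => u; rewrite inE => /e_cross.
by rewrite (negbTE vNP); case: (u \in P).
Qed.

Definition extend_nonnbhd (v : T) : {set T} := extend (P :\: nbhd e v).

Lemma maximal_independent_extend_nonnbhd (v : T) :
  v \notin P -> maximal_independent e (extend_nonnbhd v).
Proof.
move=> vNP; apply: maximal_independent_extend; first exact: subsetDl.
move=> u; rewrite setDDr setDv set0U => /setIP [_]; rewrite inE => evu.
exists v; last by rewrite e_sym.
rewrite !inE vNP /=; apply/orP; right.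
by apply/forall_inP => w; rewrite !inE => /andP [].
Qed.

Lemma nbhd_extend_nonnbhd (v : T) :
  v \notin P -> nbhd e v = P :\: extend_nonnbhd v.
Proof.
move=> vNP; rewrite -[P :\: _]setU0 -(setDv P) -setDIr extend_meet ?subsetDl //.
by rewrite setDDr setDv set0U; apply/esym/setIidPr/nbhd_subset.
Qed.

Lemma imset_extend_nonnbhd_sub :
  extend_nonnbhd @: (~: P) \subset [set S | maximal_independent e S].
Proof.
apply/subsetP => _ /imsetP [v vNP ->].
by rewrite inE maximal_independent_extend_nonnbhd // -in_setC.
Qed.

Lemma card_imset_extend_nonnbhd :
  twin_free e -> #|extend_nonnbhd @: (~: P)| = #|~: P|.
Proof.
move=> twf; apply: card_in_imset => v v'; rewrite !inE => vNP v'NP eqvv'.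
by apply: twf; rewrite !nbhd_extend_nonnbhd // eqvv'.
Qed.

Lemma card_compl_le_imax : twin_free e -> #|~: P| <= imax e.
Proof.
move=> twf; rewrite -card_imset_extend_nonnbhd //.
exact/subset_leq_card/imset_extend_nonnbhd_sub.
Qed.

Lemma card_compl_lt_imax :
  twin_free e -> {in ~: P, forall v, nbhd e v != set0} -> #|~: P| < imax e.
Proof.
move=> twf nonisolated; rewrite -card_imset_extend_nonnbhd //.
apply/proper_card/properP; split; first exact: imset_extend_nonnbhd_sub.
exists (extend P); first by rewrite inE maximal_independent_extend_part.
apply/imsetP => -[v vNP eq_ext]; move: (nonisolated v vNP).
by rewrite nbhd_extend_nonnbhd -?in_setC // -eq_ext setD_eq0 subsetUl.
Qed.

End Extension.

Lemma cross_setC (T : finType) (e : rel T) (A : {set T}) :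
  (forall x y, e x y -> (x \in A) != (y \in A)) ->
  forall x y, e x y -> (x \in ~: A) != (y \in ~: A).
Proof.
by move=> crossA x y /crossA; rewrite !inE; case: (x \in A); case: (y \in A).
Qed.

Lemma twin_free_bipartite_lt_imax (T : finType) (e : rel T) (A : {set T}) :
  symmetric e -> (forall x y, e x y -> (x \in A) != (y \in A)) -> twin_free e ->
  #|T| < imax e * 2.
Proof.
move=> e_sym crossA twf.
(* Twin-freeness allows at most one isolated vertex, so some side avoids it. *)
wlog nonisolated : A crossA / {in ~: A, forall v, nbhd e v != set0}.
  move=> hwlog; case: (boolP [forall v in ~: A, nbhd e v != set0]).
    by move/forall_inP; exact: hwlog.
  move=> /forall_inPn [v vNA /negbNE /eqP isolated_v].
  apply: (hwlog (~: A)); first exact: cross_setC.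
  move=> u; rewrite setCK => uA; apply: contraTneq vNA => isolated_u.
  have -> : v = u by apply: twf; rewrite isolated_u isolated_v.
  by rewrite inE uA.
have := card_compl_lt_imax e_sym crossA twf nonisolated.
have := card_compl_le_imax e_sym (cross_setC crossA) twf; rewrite setCK.
have := cardsC A; lia.
Qed.

Section HalfGraph.
Variable n : nat.

Definition half_graph : rel 'I_n := fun x y =>
  (~~ odd x && odd y && (x < y)) || (~~ odd y && odd x && (y < x)).

Lemma half_graph_simple : simple_graph half_graph.
Proof.
by split=> [x y | x]; rewrite /half_graph; [rewrite orbC | rewrite ltnn !andbF].
Qed.

Lemma half_graph_bipartite : bipartite half_graph.
Proof. by exists [set x : 'I_n | ~~ odd x] => x y; rewrite /half_graph !inE; lia. Qed.

Lemma half_graph_separating (x y : 'I_n) :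
  x < y -> exists z : 'I_n, half_graph x z != half_graph y z.
Proof.
move=> lt_xy; have := ltn_ord y.
case: (boolP (odd y)) => [oy|ey] lt_yn.
  have lt_zn : y.-1 < n by lia.
  by exists (Ordinal lt_zn); rewrite /half_graph /=; lia.
case: (boolP (odd x)) => [ox|ex].
  have lt_zn : x.-1 < n by lia.
  by exists (Ordinal lt_zn); rewrite /half_graph /=; lia.
have lt_zn : x.+1 < n by lia.
by exists (Ordinal lt_zn); rewrite /half_graph /=; lia.
Qed.

Lemma half_graph_twin_free : twin_free half_graph.
Proof.
move=> x y eqN; have same z : half_graph x z = half_graph y z.
  by have /setP/(_ z) := eqN; rewrite !inE.
apply/val_inj; case: (ltngtP x y) => // /half_graph_separating [z];
  by rewrite same eqxx.
Qed.

Definition staircase (t : nat) : {set 'I_n} := [set v : 'I_n | odd v == (v < t.*2)].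

Lemma independent_staircase t : independent half_graph (staircase t).
Proof. by apply/independentP => x y; rewrite !inE /half_graph; lia. Qed.

Lemma maximal_independent_staircase t :
  t <= n./2 -> maximal_independent half_graph (staircase t).
Proof.
move=> le_t; apply: dominating_maximal_independent; first exact: independent_staircase.
move=> z; rewrite inE => zN; have := ltn_ord z.
case: (boolP (odd z)) => [oz|ez] lt_zn.
  have lt_wn : z.-1 < n by lia.
  by exists (Ordinal lt_wn); rewrite ?inE /half_graph /=; lia.
have lt_wn : z.+1 < n by lia.
by exists (Ordinal lt_wn); rewrite ?inE /half_graph /=; lia.
Qed.

Lemma independent_sub_staircase (S : {set 'I_n}) :
  independent half_graph S -> exists2 t, t <= n./2 & S \subset staircase t.
Proof.
(* Odd vertices of S lie below its even ones; 2t is the first even number above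
   all odd ones. *)
move=> /independentP indS.
exists (\max_(y in S | odd y) y.+1./2).
  by apply/bigmax_leqP => y _; have := ltn_ord y; lia.
apply/subsetP => x xS; rewrite inE.
case: (boolP (odd x)) => [ox|ex].
  suff : x.+1./2 <= \max_(y in S | odd y) y.+1./2 by lia.
  by apply: leq_bigmax_cond; rewrite xS ox.
suff : \max_(y in S | odd y) y.+1./2 <= x./2 by lia.
apply/bigmax_leqP => y /andP [yS oy].
by have := indS x y xS yS; rewrite /half_graph; lia.
Qed.

Lemma staircase_inj : injective (fun t : 'I_(n./2).+1 => staircase t).
Proof.
move=> t t' /= eq_st; wlog lt_tt' : t t' eq_st / t < t'.
  move=> hwlog; case: (ltngtP t t') => [lt|gt|/val_inj //]; first exact: hwlog.
  exact/esym/hwlog.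
have lt_vn : t.*2 < n by have := ltn_ord t'; lia.
have /setP/(_ (Ordinal lt_vn)) := eq_st; rewrite !inE /= odd_double ltnn; lia.
Qed.

Lemma imax_half_graph : imax half_graph = n./2.+1.
Proof.
rewrite /imax.
have -> : [set S | maximal_independent half_graph S] =
          [set staircase t | t : 'I_(n./2).+1].
  apply/setP => S; rewrite inE; apply/idP/imsetP => [maxS | [t _ ->]].
    have [t le_t subS] := independent_sub_staircase (proj1 (andP maxS)).
    exists (Ordinal (le_t : t < n./2.+1)) => //.
    by rewrite (maximal_independent_eq maxS subS) // independent_staircase.
  by apply: maximal_independent_staircase; rewrite -ltnS.
by rewrite card_imset ?card_ord //; exact: staircase_inj.
Qed.

End HalfGraph.

Theorem corollary3p2 :
  (forall (T : finType) (e : rel T),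
      simple_graph e -> bipartite e -> twin_free e ->
      #|T| %/ 2 + 1 <= imax e)
  /\
  (forall n : nat, exists e : rel 'I_n,
      [/\ simple_graph e, bipartite e, twin_free e & imax e = n %/ 2 + 1]).
Proof.
split=> [T e [e_sym _] [A crossA] twf | n].
  by have := twin_free_bipartite_lt_imax e_sym crossA twf; lia.
exists (@half_graph n); split.
- exact: half_graph_simple.
- exact: half_graph_bipartite.
- exact: half_graph_twin_free.
- by rewrite imax_half_graph divn2 addn1.
Qed.
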